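(* Let $\{P^{(b)}\}_{b=1}^{d_A+1}$, $P^{(b)}=\{P^{(b)}_n\}_{n=1}^{d_A}$, be MUMs on $\mathbb{C}^{d_A}$ with parameter $\kappa_A$, and $\{Q^{(b')}\}_{b'=1}^{d_B+1}$, $Q^{(b')}=\{Q^{(b')}_{n'}\}_{n'=1}^{d_B}$, MUMs on $\mathbb{C}^{d_B}$ with parameter $\kappa_B$. Let $\mu,\nu\in\mathbb{R}$ and $l$ a positive integer. If a state $\rho_{AB}$ on $\mathbb{C}^{d_A}\otimes\mathbb{C}^{d_B}$ is separable, then $$\left\|\mathcal{M}^l_{\mu,\nu}(\rho_{AB})\right\|_{\mathrm{tr}}\le\sqrt{(l\mu^2+1+\kappa_A)(l\nu^2+1+\kappa_B)},$$ where $$\mathcal{M}^l_{\mu,\nu}(\rho_{AB})=\begin{pmatrix}\mu\nu J_{l\times l}&\mu\,\omega_l(\eta)^T\\ \nu\,\omega_l(\theta)&\mathcal{J}(\rho_{AB})\end{pmatrix}.$$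
   Context: MUMs (mutually unbiased measurements) on $\mathbb{C}^d$: a set of $d+1$ POVMs $\{P^{(b)}\}_{b=1}^{d+1}$, $P^{(b)}=\{P^{(b)}_n\}_{n=1}^d$ (positive semidefinite, $\sum_nP^{(b)}_n=I_d$), with $\mathrm{tr}(P^{(b)}_n)=1$, $\mathrm{tr}((P^{(b)}_n)^2)=\kappa$, $\mathrm{tr}(P^{(b)}_nP^{(b)}_{n'})=\frac{1-\kappa}{d-1}$ for $n\ne n'$, and $\mathrm{tr}(P^{(b)}_nP^{(b')}_{n'})=\frac1d$ for $b\ne b'$, where $\frac1d<\kappa\le1$. A state is separable if it is a convex combination of product states. $\rho_A,\rho_B$ are reduced states. $\theta\in\mathbb{R}^{d_A(d_A+1)}$ has entries $\mathrm{tr}(P^{(b)}_n\rho_A)$ and $\eta\in\mathbb{R}^{d_B(d_B+1)}$ has entries $\mathrm{tr}(Q^{(b')}_{n'}\rho_B)$, ordered lexicographically by $(b,n)$ resp. $(b',n')$. $\mathcal{J}(\rho_{AB})$ is the matrix with entries $\mathrm{tr}[(P^{(b)}_n\otimes Q^{(b')}_{n'})\rho_{AB}]$, row index $(b,n)$, column index $(b',n')$, in the same order. $J_{l\times l}$ is the $l\times l$ all-ones matrix; for a column vector $X$, $\omega_l(X)=(X,\dots,X)$ has $l$ columns equal to $X$. $\|G\|_{\mathrm{tr}}=\mathrm{tr}\sqrt{G^\dagger G}$. *)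

From mathcomp Require Import all_boot all_order all_algebra.
From mathcomp Require Import reals.
From mathcomp.real_closed Require Export complex mxtens.

Set Implicit Arguments.
Unset Strict Implicit.
Unset Printing Implicit Defensive.

Import Order.TTheory GRing.Theory Num.Theory.
Local Open Scope ring_scope.
Local Open Scope complex_scope.

Section Defs.
Variable R : realType.
Local Notation C := R[i].

Definition adj m n (A : 'M[C]_(m, n)) : 'M[C]_(n, m) := (map_mx Num.conj A)^T.

(* positive semidefinite (over C this also forces Hermiticity) *)
Definition psd n (A : 'M[C]_n) : Prop :=
  forall x : 'cV[C]_n, 0 <= (adj x *m A *m x) 0 0.

Definition is_state n (A : 'M[C]_n) : Prop := psd A /\ \tr A = 1.

Definition is_MUM d (kappa : R) (P : 'I_d.+1 -> 'I_d -> 'M[C]_d) : Prop :=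
  [/\ (d%:R)^-1 < kappa /\ kappa <= 1,
      (forall b n, psd (P b n)) /\ (forall b, \sum_(n < d) P b n = 1%:M),
      (forall b n, \tr (P b n) = 1),
      (forall b n, \tr (P b n *m P b n) = kappa%:C) /\
      (forall b n n', n != n' ->
          \tr (P b n *m P b n') = ((1 - kappa) / (d%:R - 1))%:C) &
      (forall b b' n n', b != b' -> \tr (P b n *m P b' n') = ((d%:R)^-1)%:C)].

(* C^dA (x) C^dB is indexed by mxtens_index (i, j) = i * dB + j, as for tensmx *)
Definition ptraceB dA dB (rho : 'M[C]_(dA * dB)) : 'M[C]_dA :=
  \matrix_(i, i') \sum_(j < dB) rho (mxtens_index (i, j)) (mxtens_index (i', j)).

Definition ptraceA dA dB (rho : 'M[C]_(dA * dB)) : 'M[C]_dB :=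
  \matrix_(j, j') \sum_(i < dA) rho (mxtens_index (i, j)) (mxtens_index (i, j')).

Definition separable dA dB (rho : 'M[C]_(dA * dB)) : Prop :=
  exists (k : nat) (p : 'I_k -> R) (s : 'I_k -> 'M[C]_dA) (t : 'I_k -> 'M[C]_dB),
    [/\ (forall i, 0 <= p i), \sum_(i < k) p i = 1,
        (forall i, is_state (s i) /\ is_state (t i)) &
        rho = \sum_(i < k) (p i)%:C *: (s i *t t i)].

(* theta, eta, J(rho); the index (b, n) is encoded lexicographically as b * d + n *)
Definition theta_vec dA dB (P : 'I_dA.+1 -> 'I_dA -> 'M[C]_dA) (rho : 'M[C]_(dA * dB))
  : 'cV[C]_(dA.+1 * dA) :=
  \col_k \tr (P (mxtens_unindex k).1 (mxtens_unindex k).2 *m ptraceB rho).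

Definition eta_vec dA dB (Q : 'I_dB.+1 -> 'I_dB -> 'M[C]_dB) (rho : 'M[C]_(dA * dB))
  : 'cV[C]_(dB.+1 * dB) :=
  \col_k \tr (Q (mxtens_unindex k).1 (mxtens_unindex k).2 *m ptraceA rho).

Definition Jmat dA dB (P : 'I_dA.+1 -> 'I_dA -> 'M[C]_dA)
  (Q : 'I_dB.+1 -> 'I_dB -> 'M[C]_dB) (rho : 'M[C]_(dA * dB))
  : 'M[C]_(dA.+1 * dA, dB.+1 * dB) :=
  \matrix_(k, k')
    \tr ((P (mxtens_unindex k).1 (mxtens_unindex k).2
          *t Q (mxtens_unindex k').1 (mxtens_unindex k').2) *m rho).

Definition omega m (l : nat) (X : 'cV[C]_m) : 'M[C]_(m, l) := \matrix_(i, j) X i 0.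

Definition Mmat dA dB (P : 'I_dA.+1 -> 'I_dA -> 'M[C]_dA)
  (Q : 'I_dB.+1 -> 'I_dB -> 'M[C]_dB) (mu nu : R) (l : nat) (rho : 'M[C]_(dA * dB))
  : 'M[C]_(l + dA.+1 * dA, l + dB.+1 * dB) :=
  block_mx (const_mx (mu * nu)%:C) ((mu%:C) *: (omega l (eta_vec Q rho))^T)
           ((nu%:C) *: omega l (theta_vec P rho)) (Jmat P Q rho).

(* S is the (positive semidefinite) square root of A; then ||G||_tr = tr S for A = G^dag G *)
Definition psd_sqrt_of n (S A : 'M[C]_n) : Prop := psd S /\ S *m S = A.

End Defs.

From mathcomp Require Import all_boot all_order all_algebra reals.
From mathcomp.real_closed Require Import complex mxtens.
From mathcomp Require Import ring lra.
Import Order.TTheory GRing.Theory Num.Theory.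
Local Open Scope ring_scope.
Local Open Scope complex_scope.
Set Implicit Arguments.
Unset Strict Implicit.
Unset Printing Implicit Defensive.

(* Write the separable state as rho = \sum_i p_i s_i (x) t_i.  The outcome
   probabilities of the MUMs are real, so M^l_{mu,nu}(rho) = \sum_i p_i u_i v_i^dag
   with u_i = (mu,..,mu, theta(s_i)) and v_i = (nu,..,nu, eta(t_i)), and the trace
   norm of such a combination is at most \sum_i p_i |u_i| |v_i|.  It remains to
   bound |theta(s)|^2 <= 1 + kappa for a state s: the traceless parts
   P^(b)_n - I/d are orthogonal across bases and have a fixed Gram matrix inside a
   basis, which together with tr s^2 <= 1 bounds the squared deviations of the
   probabilities tr(P^(b)_n s) from 1/d by kappa - 1/d. *)

Lemma mxtrace_sum (R : pzRingType) n I (r : seq I) (Pr : pred I) (F : I -> 'M[R]_n) :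
  \tr (\sum_(i <- r | Pr i) F i) = \sum_(i <- r | Pr i) \tr (F i).
Proof. exact: (big_morph _ (@mxtraceD _ _) (mxtrace0 _ _)). Qed.

Lemma big_mxtens (V : nmodType) m n (F : 'I_(m * n) -> V) :
  \sum_(k < m * n) F k = \sum_(i < m) \sum_(j < n) F (mxtens_index (i, j)).
Proof.
rewrite pair_big (reindex (@mxtens_index m n)) /=; last first.
  by exists (@mxtens_unindex m n) => k _; rewrite (mxtens_indexK, mxtens_unindexK).
by apply: eq_bigr => -[i j].
Qed.

Lemma mxtrace_tens (R : comPzRingType) m n (A : 'M[R]_m) (B : 'M[R]_n) :
  \tr (A *t B) = \tr A * \tr B.
Proof.
rewrite /mxtrace big_mxtens mulr_suml; apply: eq_bigr => i _.
by rewrite mulr_sumr; apply: eq_bigr => j _; rewrite tensmxE.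
Qed.

Lemma summx_block (V : nmodType) k m1 m2 n1 n2
    (A : 'I_k -> 'M[V]_(m1, n1)) (B : 'I_k -> 'M[V]_(m1, n2))
    (D : 'I_k -> 'M[V]_(m2, n1)) (E : 'I_k -> 'M[V]_(m2, n2)) :
  \sum_i block_mx (A i) (B i) (D i) (E i)
  = block_mx (\sum_i A i) (\sum_i B i) (\sum_i D i) (\sum_i E i).
Proof.
apply/matrixP => a b; rewrite -(splitK a) -(splitK b).
by case: (split a) => a'; case: (split b) => b' /=;
  rewrite ?(block_mxEul, block_mxEur, block_mxEdl, block_mxEdr) !summxE;
  apply: eq_bigr => i _; rewrite ?(block_mxEul, block_mxEur, block_mxEdl, block_mxEdr).
Qed.

Section MUMCriterion.
Variable R : realType.
Local Notation C := R[i].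
Local Notation re := (@complex.Re R).
Local Notation im := (@complex.Im R).

Lemma conjE (x : C) : Num.conj x = x^*%C. Proof. by []. Qed.
Lemma ReR (a : R) : re a%:C = a. Proof. by []. Qed.
Lemma ReD (x y : C) : re (x + y) = re x + re y. Proof. by case: x; case: y. Qed.
Lemma ImD (x y : C) : im (x + y) = im x + im y. Proof. by case: x; case: y. Qed.
Lemma ReN (x : C) : re (- x) = - re x. Proof. by case: x. Qed.
Lemma ReM (x y : C) : re (x * y) = re x * re y - im x * im y.
Proof. by case: x; case: y. Qed.
Lemma ImM (x y : C) : im (x * y) = re x * im y + im x * re y.
Proof. by case: x => a b; case: y => c d. Qed.
Lemma Re_conj (x : C) : re (Num.conj x) = re x. Proof. by case: x. Qed.
Lemma Im_conj (x : C) : im (Num.conj x) = - im x. Proof. by case: x. Qed.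
Lemma ReMR (a : R) (x : C) : re (a%:C * x) = a * re x.
Proof. by rewrite ReM mul0r subr0. Qed.
Lemma Re_mulrn (x : C) k : re (x *+ k) = re x *+ k.
Proof. by elim: k => [|k IH]; rewrite ?mulr0n // !mulrS ReD IH. Qed.
Lemma Re_sum I (r : seq I) (Pr : pred I) (F : I -> C) :
  re (\sum_(i <- r | Pr i) F i) = \sum_(i <- r | Pr i) re (F i).
Proof. exact: (big_morph _ ReD). Qed.
Lemma Im_sum I (r : seq I) (Pr : pred I) (F : I -> C) :
  im (\sum_(i <- r | Pr i) F i) = \sum_(i <- r | Pr i) im (F i).
Proof. exact: (big_morph _ ImD). Qed.
Lemma ger0_Re (z : C) : 0 <= z -> 0 <= re z.
Proof. by rewrite lecE => /andP[]. Qed.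
Lemma Im_conj_id (x : C) : Num.conj x = x -> im x = 0.
Proof. by case: x => a b /= [] h; lra. Qed.

Lemma adjE m n (X : 'M[C]_(m, n)) i j : adj X i j = Num.conj (X j i).
Proof. by rewrite /adj !mxE. Qed.
Lemma adjK m n (X : 'M[C]_(m, n)) : adj (adj X) = X.
Proof. by apply/matrixP => i j; rewrite !adjE conjE conjcK. Qed.
Lemma adjM m n p (X : 'M[C]_(m, n)) (Y : 'M[C]_(n, p)) :
  adj (X *m Y) = adj Y *m adj X.
Proof. by rewrite /adj map_mxM trmx_mul. Qed.
Lemma adjD m n (X Y : 'M[C]_(m, n)) : adj (X + Y) = adj X + adj Y.
Proof. by apply/matrixP => i j; rewrite !(adjE, mxE) rmorphD. Qed.
Lemma adjZ m n (c : C) (X : 'M[C]_(m, n)) : adj (c *: X) = Num.conj c *: adj X.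
Proof. by apply/matrixP => i j; rewrite !(adjE, mxE) rmorphM. Qed.
Lemma adj_sum m n I (r : seq I) (Pr : pred I) (F : I -> 'M[C]_(m, n)) :
  adj (\sum_(i <- r | Pr i) F i) = \sum_(i <- r | Pr i) adj (F i).
Proof.
apply: (big_morph _ (@adjD m n)).
by apply/matrixP => i j; rewrite !(adjE, mxE) rmorph0.
Qed.
Lemma adj_scalar n (c : R) : adj ((c%:C)%:M : 'M[C]_n) = (c%:C)%:M.
Proof.
apply/matrixP => i j; rewrite adjE !mxE eq_sym.
by case: eqP; rewrite ?conjE ?conjc_real ?rmorph0.
Qed.
Lemma adj_col m1 m2 n (X : 'M[C]_(m1, n)) (Y : 'M[C]_(m2, n)) :
  adj (col_mx X Y) = row_mx (adj X) (adj Y).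
Proof. by rewrite /adj map_col_mx tr_col_mx. Qed.
Lemma mxtrace_adj n (X : 'M[C]_n) : \tr (adj X) = Num.conj (\tr X).
Proof. by rewrite /mxtrace rmorph_sum; apply: eq_bigr => i _; rewrite adjE. Qed.

Definition hsdot m n (X Y : 'M[C]_(m, n)) : R := re (\tr (adj X *m Y)).

Lemma hsdotE m n (X Y : 'M[C]_(m, n)) :
  hsdot X Y = \sum_i \sum_j (re (X i j) * re (Y i j) + im (X i j) * im (Y i j)).
Proof.
rewrite /hsdot /mxtrace Re_sum exchange_big /=; apply: eq_bigr => i _.
rewrite mxE Re_sum; apply: eq_bigr => j _.
by rewrite adjE ReM Re_conj Im_conj mulNr opprK.
Qed.

Lemma hsdot_ge0 m n (X : 'M[C]_(m, n)) : 0 <= hsdot X X.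
Proof.
rewrite hsdotE; apply: sumr_ge0 => i _; apply: sumr_ge0 => j _.
by rewrite -!expr2 addr_ge0 ?sqr_ge0.
Qed.

Lemma hsdot_eq0 m n (X : 'M[C]_(m, n)) : hsdot X X = 0 -> X = 0.
Proof.
have sq_ge0 (a b : R) : 0 <= a * a + b * b by rewrite -!expr2 addr_ge0 ?sqr_ge0.
rewrite hsdotE => /eqP; rewrite psumr_eq0 => [/allP X0|i _]; last first.
  exact: sumr_ge0.
apply/matrixP => i j; have /implyP := X0 i (mem_index_enum _).
rewrite psumr_eq0 // => /(_ isT)/allP/(_ j (mem_index_enum _)).
rewrite /= paddr_eq0 -?expr2 ?sqr_ge0 // !sqrf_eq0 mxE => /andP[/eqP h1 /eqP h2].
by case: (X i j) h1 h2 => a b /= -> ->.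
Qed.

Lemma hsdotC m n (X Y : 'M[C]_(m, n)) : hsdot X Y = hsdot Y X.
Proof.
rewrite !hsdotE; apply: eq_bigr => i _; apply: eq_bigr => j _.
by rewrite mulrC [im _ * _]mulrC.
Qed.

Lemma hsdotDr m n (X Y Z : 'M[C]_(m, n)) : hsdot X (Y + Z) = hsdot X Y + hsdot X Z.
Proof. by rewrite /hsdot mulmxDr mxtraceD ReD. Qed.
Lemma hsdotDl m n (X Y Z : 'M[C]_(m, n)) : hsdot (Y + Z) X = hsdot Y X + hsdot Z X.
Proof. by rewrite hsdotC hsdotDr !(hsdotC X). Qed.
Lemma hsdotNr m n (X Y : 'M[C]_(m, n)) : hsdot X (- Y) = - hsdot X Y.
Proof. by rewrite /hsdot mulmxN raddfN ReN. Qed.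
Lemma hsdotBr m n (X Y Z : 'M[C]_(m, n)) : hsdot X (Y - Z) = hsdot X Y - hsdot X Z.
Proof. by rewrite hsdotDr hsdotNr. Qed.
Lemma hsdotBl m n (X Y Z : 'M[C]_(m, n)) : hsdot (Y - Z) X = hsdot Y X - hsdot Z X.
Proof. by rewrite hsdotC hsdotBr !(hsdotC X). Qed.
Lemma hsdotZr m n (X Y : 'M[C]_(m, n)) (a : R) : hsdot X (a%:C *: Y) = a * hsdot X Y.
Proof. by rewrite /hsdot -scalemxAr mxtraceZ ReMR. Qed.
Lemma hsdotZl m n (X Y : 'M[C]_(m, n)) (a : R) : hsdot (a%:C *: Y) X = a * hsdot Y X.
Proof. by rewrite hsdotC hsdotZr hsdotC. Qed.
Lemma hsdot_sumr m n I (r : seq I) (Pr : pred I) (X : 'M[C]_(m, n)) F :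
  hsdot X (\sum_(i <- r | Pr i) F i) = \sum_(i <- r | Pr i) hsdot X (F i).
Proof.
elim/big_rec2: _ => [|i y1 y2 _ IH]; last by rewrite hsdotDr IH.
by rewrite /hsdot mulmx0 mxtrace0.
Qed.
Lemma hsdot_suml m n I (r : seq I) (Pr : pred I) (X : 'M[C]_(m, n)) F :
  hsdot (\sum_(i <- r | Pr i) F i) X = \sum_(i <- r | Pr i) hsdot (F i) X.
Proof. by rewrite hsdotC hsdot_sumr; apply: eq_bigr => i _; rewrite hsdotC. Qed.

Lemma hsdot_herm n (X Y : 'M[C]_n) : adj X = X -> hsdot X Y = re (\tr (X *m Y)).
Proof. by rewrite /hsdot => ->. Qed.

Lemma hsdot_col m1 m2 (x : 'cV[C]_m1) (y : 'cV[C]_m2) :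
  hsdot (col_mx x y) (col_mx x y) = hsdot x x + hsdot y y.
Proof.
rewrite !hsdotE big_split_ord /=.
by congr (_ + _); apply: eq_bigr => i _; apply: eq_bigr => j _;
  rewrite ?col_mxEu ?col_mxEd.
Qed.

Lemma AMGM2 (t a b c d : R) : 0 < t ->
  2 * (a * b + c * d) <= t * (a * a + c * c) + t^-1 * (b * b + d * d).
Proof.
move=> t_gt0; rewrite -subr_ge0.
have -> : t * (a * a + c * c) + t^-1 * (b * b + d * d) - 2 * (a * b + c * d)
    = t^-1 * ((t * a - b) ^+ 2 + (t * c - d) ^+ 2).
  by field; rewrite gt_eqF.
apply: mulr_ge0; first by rewrite invr_ge0 ltW.
by rewrite addr_ge0 ?sqr_ge0.
Qed.

Lemma hsdot_AMGM m n (X Y : 'M[C]_(m, n)) t : 0 < t ->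
  2 * hsdot X Y <= t * hsdot X X + t^-1 * hsdot Y Y.
Proof.
move=> t_gt0; rewrite !hsdotE !mulr_sumr -big_split /=; apply: ler_sum => i _.
rewrite !mulr_sumr -big_split /=; apply: ler_sum => j _; exact: AMGM2.
Qed.

Definition sesq n (A : 'M[C]_n) (x y : 'cV[C]_n) : C := (adj x *m A *m y) 0 0.

Lemma sesqDl n (A : 'M[C]_n) x1 x2 y : sesq A (x1 + x2) y = sesq A x1 y + sesq A x2 y.
Proof. by rewrite /sesq adjD !mulmxDl mxE. Qed.
Lemma sesqDr n (A : 'M[C]_n) x y1 y2 : sesq A x (y1 + y2) = sesq A x y1 + sesq A x y2.
Proof. by rewrite /sesq !mulmxDr mxE. Qed.
Lemma sesqZl n (A : 'M[C]_n) c x y : sesq A (c *: x) y = Num.conj c * sesq A x y.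
Proof. by rewrite /sesq adjZ -!scalemxAl mxE. Qed.
Lemma sesqZr n (A : 'M[C]_n) c x y : sesq A x (c *: y) = c * sesq A x y.
Proof. by rewrite /sesq -!scalemxAr mxE. Qed.
Lemma sesq_delta n (A : 'M[C]_n) i j : sesq A (delta_mx i 0) (delta_mx j 0) = A i j.
Proof.
rewrite /sesq; have -> : adj (delta_mx i 0 : 'cV[C]_n) = delta_mx 0 i.
  apply/matrixP => a b; rewrite adjE !mxE.
  by case: eqP; case: eqP; rewrite ?rmorph1 ?rmorph0.
by rewrite -rowE -colE !mxE.
Qed.
Lemma sesq_shift n (A : 'M[C]_n) (e : R) x y :
  sesq (A + (e%:C)%:M) x y = sesq A x y + e%:C * (adj x *m y) 0 0.
Proof.
by rewrite /sesq mulmxDr mulmxDl mul_mx_scalar -scalemxAl mxE [in X in _ + X]mxE.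
Qed.
Lemma hsdot_mulmx m n (A : 'M[C]_(m, n)) (y : 'cV[C]_n) :
  hsdot (A *m y) (A *m y) = re (sesq (adj A *m A) y y).
Proof. by rewrite /hsdot /sesq /mxtrace big_ord1 adjM !mulmxA. Qed.
Lemma hsdot_cV n (x y : 'cV[C]_n) : hsdot x y = re ((adj x *m y) 0 0).
Proof. by rewrite /hsdot /mxtrace big_ord1. Qed.

Section PositiveSemidefinite.
Variables (n : nat) (A : 'M[C]_n).
Hypothesis A_psd : psd A.

Lemma psd_Re_ge0 x : 0 <= re (sesq A x x).
Proof. exact/ger0_Re/A_psd. Qed.

Lemma psd_diag_real i : im (A i i) = 0.
Proof. by rewrite -sesq_delta; apply/ger0_Im/A_psd. Qed.

Lemma psd_tr_real : im (\tr A) = 0.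
Proof. by rewrite /mxtrace Im_sum big1 // => i _; apply: psd_diag_real. Qed.

(* Over C positivity of x^dag A x on e_i + e_j and e_i + i e_j forces A^dag = A. *)
Lemma psd_adj : adj A = A.
Proof.
apply/matrixP => i j; rewrite adjE.
pose e k : 'cV[C]_n := delta_mx k 0.
have H1 : im (sesq A (e i + e j) (e i + e j)) = 0 by apply/ger0_Im/A_psd.
have H2 : im (sesq A (e i + 'i *: e j) (e i + 'i *: e j)) = 0 by apply/ger0_Im/A_psd.
rewrite !(sesqDl, sesqDr, sesqZl, sesqZr) !sesq_delta !ImD !psd_diag_real in H1 H2.
rewrite !ImM /= ReM /= psd_diag_real in H2.
move: H1 H2; case: (A i j) => a b; case: (A j i) => c d /= H1 H2.
by rewrite /Num.conj /=; congr Complex; lra.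
Qed.

Lemma psd_shift_unit (e : R) : 0 < e -> A + (e%:C)%:M \in unitmx.
Proof.
move=> e_gt0; rewrite unitmxE unitfE; apply/negP => /det0P [v v_neq0 vA0].
have x0 : hsdot (adj v) (adj v) = 0.
  have : re (sesq (A + (e%:C)%:M) (adj v) (adj v)) = 0.
    by rewrite /sesq adjK vA0 mul0mx mxE.
  rewrite sesq_shift ReD ReMR -hsdot_cV => H.
  have := psd_Re_ge0 (adj v) => sesq_ge0; have := hsdot_ge0 (adj v) => x_ge0.
  have : e * hsdot (adj v) (adj v) <= 0 by lra.
  by rewrite pmulr_rle0 // => x_le0; apply/eqP; rewrite eq_le x_le0 x_ge0.
move: v_neq0; rewrite -(adjK v) (hsdot_eq0 x0).
by rewrite /adj map_mx0 trmx0 eqxx.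
Qed.

End PositiveSemidefinite.

Lemma quadratic_ge0_disc (a b Z : R) : 0 <= a -> 0 <= b -> 0 <= Z ->
  (forall s, 0 <= a - 2 * s * Z + s ^+ 2 * Z * b) -> Z <= a * b.
Proof.
move=> a_ge0 b_ge0 Z_ge0 H.
have [b_gt0|] := ltrP 0 b.
  have := H b^-1; have b_neq0 : b != 0 by rewrite gt_eqF.
  have -> : a - 2 * b^-1 * Z + b^-1 ^+ 2 * Z * b = (a * b - Z) / b by field.
  by rewrite pmulr_lge0 ?invr_gt0 // subr_ge0.
move=> b_le0; have b0 : b = 0 by apply/eqP; rewrite eq_le b_le0 b_ge0.
rewrite b0 mulr0; have [Z_gt0|//] := ltrP 0 Z.
have := H ((a + 1) / Z); rewrite b0 mulr0 addr0.
have -> : a - 2 * ((a + 1) / Z) * Z = - a - 2 by field; rewrite gt_eqF.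
lra.
Qed.

Lemma psd_entry_le n (A : 'M[C]_n) i j : psd A ->
  re (A i j) ^+ 2 + im (A i j) ^+ 2 <= re (A i i) * re (A j j).
Proof.
move=> A_psd; have Aji : A j i = Num.conj (A i j) by rewrite -{1}(psd_adj A_psd) adjE.
have Aii_ge0 : 0 <= re (A i i) by rewrite -sesq_delta psd_Re_ge0.
have Ajj_ge0 : 0 <= re (A j j) by rewrite -sesq_delta psd_Re_ge0.
apply: quadratic_ge0_disc => //; first by rewrite addr_ge0 ?sqr_ge0.
move=> s; pose e k : 'cV[C]_n := delta_mx k 0.
have := psd_Re_ge0 A_psd (e i + ((- s)%:C * Num.conj (A i j)) *: e j).
rewrite !(sesqDl, sesqDr, sesqZl, sesqZr) !sesq_delta Aji.
move: (psd_diag_real A_psd i) (psd_diag_real A_psd j).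
case: (A i i) => a1 a2; case: (A j j) => b1 b2; case: (A i j) => p q /= _ ->.
rewrite /Num.conj /= => H; nra.
Qed.

(* Summing |A_ij|^2 <= A_ii A_jj gives tr A^2 <= (tr A)^2. *)
Lemma state_hsdot_le1 n (A : 'M[C]_n) : is_state A -> hsdot A A <= 1.
Proof.
move=> [A_psd trA1].
have -> : 1 = re (\tr A) * re (\tr A) by rewrite trA1 mulr1.
rewrite hsdotE /mxtrace Re_sum mulr_suml; apply: ler_sum => i _.
rewrite mulr_sumr; apply: ler_sum => j _; rewrite -!expr2; exact: psd_entry_le.
Qed.

Section TraceNormBound.
Variables (K N : nat) (M : 'M[C]_(K, N)) (S : 'M[C]_N).
Hypotheses (S_psd : psd S) (S_sqrt : S *m S = adj M *m M).

(* As e -> 0, M (S + e)^-1 tends to the partial isometry of the polar decomposition of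
   M; for e > 0 it is a contraction with tr S <= Re tr (M^dag M (S + e)^-1) + e N. *)
Section Regularized.
Variable e : R.
Hypothesis e_gt0 : 0 < e.
Let T := S + (e%:C)%:M.
Let T_unit : T \in unitmx := psd_shift_unit S_psd e_gt0.
Let S_adj : adj S = S := psd_adj S_psd.

Lemma regularized_contraction (z : 'cV[C]_N) :
  hsdot (M *m invmx T *m z) (M *m invmx T *m z) <= hsdot z z.
Proof.
set y := invmx T *m z.
have zE : z = S *m y + e%:C *: y by rewrite -mul_scalar_mx -mulmxDl mulKVmx.
rewrite -mulmxA -/y hsdot_mulmx -S_sqrt -{1}S_adj -hsdot_mulmx.
rewrite [in X in _ <= X]zE !(hsdotDl, hsdotDr, hsdotZl, hsdotZr).
have Sy : hsdot (S *m y) y = re (sesq S y y) by rewrite hsdot_cV /sesq adjM S_adj mulmxA.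
rewrite (hsdotC y) Sy.
have := psd_Re_ge0 S_psd y; have := hsdot_ge0 y; have := hsdot_ge0 (S *m y).
move=> Sy_ge0 y_ge0 Syy_ge0.
have := mulr_ge0 (ltW e_gt0) Syy_ge0.
have := mulr_ge0 (ltW e_gt0) (mulr_ge0 (ltW e_gt0) y_ge0).
lra.
Qed.

Lemma regularized_tr_le :
  re (\tr S) <= re (\tr (adj M *m (M *m invmx T))) + e * N%:R.
Proof.
have T_adj : adj T = T by rewrite /T adjD S_adj adj_scalar.
have invT_S : invmx T *m S = 1%:M - e%:C *: invmx T.
  have -> : S = T - (e%:C)%:M by rewrite /T addrK.
  by rewrite mulmxBr mulVmx // mul_mx_scalar.
have invT_ge0 : 0 <= re (\tr (invmx T)).
  rewrite /mxtrace Re_sum; apply: sumr_ge0 => j _.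
  set x : 'cV[C]_N := delta_mx j 0; set y := invmx T *m x.
  have xE : x = T *m y by rewrite /y mulKVmx.
  have -> : invmx T j j = sesq T y y.
    rewrite -sesq_delta -/x /sesq {1}xE adjM T_adj mulmxK //.
    by rewrite xE mulmxA.
  rewrite sesq_shift ReD ReMR -hsdot_cV.
  have := psd_Re_ge0 S_psd y; have := hsdot_ge0 y => y_ge0 Sy_ge0.
  have := mulr_ge0 (ltW e_gt0) y_ge0; lra.
have -> : \tr S = \tr (invmx T *m (T *m S)) by rewrite mulmxA mulVmx // mul1mx.
rewrite /T mulmxDl mul_scalar_mx S_sqrt mulmxDr -scalemxAr invT_S mxtraceD.
rewrite mxtraceZ mxtrace_mulC mulmxA ReD ReMR raddfB /= mxtrace1 mxtraceZ.
rewrite ReD ReN ReMR Re_mulrn /=.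
have := mulr_ge0 (ltW e_gt0) (mulr_ge0 (ltW e_gt0) invT_ge0); lra.
Qed.

End Regularized.

(* Re tr (M^dag W) = \sum_i p_i <u_i, W v_i>, and |W v_i| <= |v_i| for the
   regularized contraction W. *)
Lemma tr_psd_sqrt_le k (p : 'I_k -> R) (u : 'I_k -> 'cV[C]_K) (v : 'I_k -> 'cV[C]_N) t :
  (forall i, 0 <= p i) -> M = \sum_i (p i)%:C *: (u i *m adj (v i)) -> 0 < t ->
  2 * re (\tr S) <= \sum_i p i * (t * hsdot (u i) (u i) + t^-1 * hsdot (v i) (v i)).
Proof.
move=> p_ge0 ME t_gt0; apply/ler_addgt0Pr => e' e'_gt0.
pose e := e' / (2 * (N%:R + 1)).
have N1_gt0 : 0 < N%:R + 1 :> R by rewrite ltr_wpDl.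
have e_gt0 : 0 < e by rewrite divr_gt0 // mulr_gt0.
have eN_le : 2 * (e * N%:R) <= e'.
  have -> : 2 * (e * N%:R) = e' * (N%:R / (N%:R + 1)) by rewrite /e; field; rewrite gt_eqF.
  by apply: ler_piMr; [exact: ltW | rewrite ler_pdivrMr // mul1r lerDl].
set W := M *m invmx (S + (e%:C)%:M).
have adjME : adj M = \sum_i (p i)%:C *: (v i *m adj (u i)).
  by rewrite ME adj_sum; apply: eq_bigr => i _; rewrite adjZ adjM adjK conjE conjc_real.
have trMW : re (\tr (adj M *m W)) = \sum_i p i * hsdot (u i) (W *m v i).
  rewrite adjME mulmx_suml mxtrace_sum Re_sum; apply: eq_bigr => i _.
  by rewrite -scalemxAl mxtraceZ ReMR /hsdot -mulmxA mxtrace_mulC mulmxA.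
have term_le i :
    2 * hsdot (u i) (W *m v i) <= t * hsdot (u i) (u i) + t^-1 * hsdot (v i) (v i).
  apply: le_trans (hsdot_AMGM (u i) (W *m v i) t_gt0) _.
  rewrite lerD2l; apply: ler_wpM2l; first by rewrite invr_ge0 ltW.
  exact: regularized_contraction.
have : 2 * re (\tr (adj M *m W))
    <= \sum_i p i * (t * hsdot (u i) (u i) + t^-1 * hsdot (v i) (v i)).
  by rewrite trMW mulr_sumr; apply: ler_sum => i _; rewrite mulrCA ler_wpM2l.
have := regularized_tr_le e_gt0; rewrite -/W; lra.
Qed.

Lemma tr_psd_sqrt_le_sqrt k (p : 'I_k -> R) (u : 'I_k -> 'cV[C]_K)
    (v : 'I_k -> 'cV[C]_N) (a b : R) :
  (forall i, 0 <= p i) -> \sum_i p i = 1 -> M = \sum_i (p i)%:C *: (u i *m adj (v i)) ->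
  0 < a -> 0 < b ->
  (forall i, hsdot (u i) (u i) <= a) -> (forall i, hsdot (v i) (v i) <= b) ->
  \tr S <= (Num.sqrt (a * b))%:C.
Proof.
move=> p_ge0 p_sum1 ME a_gt0 b_gt0 u_le v_le.
rewrite sqrtrM; last exact: ltW.
set sa := Num.sqrt a; set sb := Num.sqrt b.
have sa_gt0 : 0 < sa by rewrite sqrtr_gt0.
have sb_gt0 : 0 < sb by rewrite sqrtr_gt0.
have saa : sa * sa = a by rewrite -expr2 sqr_sqrtr // ltW.
have sbb : sb * sb = b by rewrite -expr2 sqr_sqrtr // ltW.
pose t := sb / sa; have t_gt0 : 0 < t by rewrite divr_gt0.
have ab_AMGM : t * a + t^-1 * b = 2 * (sa * sb).
  by rewrite /t -saa -sbb; field; rewrite !gt_eqF.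
have : 2 * re (\tr S) <= 2 * (sa * sb).
  apply: le_trans (tr_psd_sqrt_le p_ge0 ME t_gt0) _.
  rewrite -ab_AMGM -[X in _ <= X]mul1r -p_sum1 mulr_suml.
  apply: ler_sum => i _; apply: ler_wpM2l => //.
  have tV_ge0 : 0 <= t^-1 by rewrite invr_ge0 ltW.
  by apply: lerD; apply: ler_wpM2l; rewrite ?(ltW t_gt0) ?u_le ?v_le.
move=> re_le; rewrite lecE /= (psd_tr_real S_psd) eqxx /=; lra.
Qed.

End TraceNormBound.

Definition probs d (P : 'I_d.+1 -> 'I_d -> 'M[C]_d) (sig : 'M[C]_d) : 'cV[C]_(d.+1 * d) :=
  \col_k \tr (P (mxtens_unindex k).1 (mxtens_unindex k).2 *m sig).

Lemma probs_index d (P : 'I_d.+1 -> 'I_d -> 'M[C]_d) sig b n :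
  probs P sig (mxtens_index (b, n)) 0 = \tr (P b n *m sig).
Proof. by rewrite mxE mxtens_indexK. Qed.

Lemma probs_real d (P : 'I_d.+1 -> 'I_d -> 'M[C]_d) sig k :
  (forall b n, psd (P b n)) -> psd sig -> Num.conj (probs P sig k 0) = probs P sig k 0.
Proof.
move=> P_psd sig_psd; rewrite mxE -mxtrace_adj adjM.
by rewrite (psd_adj sig_psd) (psd_adj (P_psd _ _)) mxtrace_mulC.
Qed.

Lemma is_MUM_kappa_gt0 d kappa (P : 'I_d.+1 -> 'I_d -> 'M[C]_d) :
  is_MUM kappa P -> 0 < kappa.
Proof. by case=> [[kappa_gt _] _ _ _ _]; apply: le_lt_trans kappa_gt; rewrite invr_ge0. Qed.

Lemma hsdot_shift n (c : R) (A B : 'M[C]_n) :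
  hsdot (A - (c%:C)%:M) (B - (c%:C)%:M)
  = hsdot A B - c * re (\tr A) - c * re (\tr B) + c ^+ 2 * n%:R.
Proof.
have hsdot_scalar (D : 'M[C]_n) : hsdot (c%:C)%:M D = c * re (\tr D).
  by rewrite /hsdot adj_scalar mul_scalar_mx mxtraceZ ReMR.
rewrite hsdotBl !hsdotBr [hsdot A (c%:C)%:M]hsdotC !hsdot_scalar mxtrace_scalar.
by rewrite Re_mulrn /= -mulr_natr; ring.
Qed.

Section MUMProbabilities.
Variables (d : nat) (kappa : R) (P : 'I_d.+1 -> 'I_d -> 'M[C]_d) (sig : 'M[C]_d).
Hypotheses (P_MUM : is_MUM kappa P) (sig_state : is_state sig).

(* A state exists only if d > 0, and 1/d < kappa <= 1 then excludes d = 1. *)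
Lemma is_MUM_dim_gt1 : (1 < d)%N.
Proof.
have [[kappa_gt kappa_le1] _ _ _ _] := P_MUM.
case: (posnP d) => [d0|].
  have := sig_state.2; rewrite /mxtrace big1 => [/eqP|[m m_lt] _].
    by rewrite eq_sym oner_eq0.
  by exfalso; rewrite d0 in m_lt.
case: d P sig P_MUM sig_state kappa_gt kappa_le1 => [//|[|//]] _ _ _ _ kappa_gt kappa_le1 _.
by move: (lt_le_trans kappa_gt kappa_le1); rewrite invr1 ltxx.
Qed.

Let r : R := (d%:R)^-1.
Let X b n := P b n - (r%:C)%:M.
Let Y := sig - (r%:C)%:M.
Let dev b n := re (\tr (P b n *m sig)) - r.
Let gam := (1 - kappa) / (d%:R - 1) - r.
Let del := kappa - r - gam.

Lemma dim_neq0 : (d%:R : R) != 0.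
Proof. by rewrite pnatr_eq0 -lt0n ltnW // is_MUM_dim_gt1. Qed.
Lemma dim_sub1_neq0 : (d%:R : R) - 1 != 0.
Proof. by rewrite subr_eq0 pnatr_eq1 gtn_eqF // is_MUM_dim_gt1. Qed.
Lemma sqr_r_dim : r ^+ 2 * d%:R = r.
Proof. by rewrite /r expr2 -mulrA mulVf ?dim_neq0 // mulr1. Qed.
Lemma Re_tr_P b n : re (\tr (P b n)) = 1.
Proof. by case: P_MUM => [_ _ -> _ _]. Qed.
Lemma Re_tr_sig : re (\tr sig) = 1.
Proof. by rewrite sig_state.2. Qed.
Lemma adj_P b n : adj (P b n) = P b n.
Proof. by case: P_MUM => [_ [P_psd _] _ _ _]; apply: psd_adj. Qed.

Lemma hsdot_XY b n : hsdot (X b n) Y = dev b n.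
Proof.
rewrite /X /Y /dev hsdot_shift Re_tr_P Re_tr_sig sqr_r_dim.
by rewrite (hsdot_herm _ (adj_P b n)); ring.
Qed.

Lemma hsdot_XX b n b' n' :
  hsdot (X b n) (X b' n') = if b == b' then gam + (n == n')%:R * del else 0.
Proof.
rewrite /X hsdot_shift !Re_tr_P sqr_r_dim (hsdot_herm _ (adj_P b n)).
case: P_MUM => [_ _ _ [PP_diag PP_offdiag] PP_unbiased].
case: eqP => [<-|/eqP b_neq]; last by rewrite PP_unbiased // ReR /r; ring.
case: eqP => [<-|/eqP n_neq]; first by rewrite PP_diag ReR /del /gam /=; ring.
by rewrite PP_offdiag // ReR /gam /=; ring.
Qed.

Lemma hsdot_YY : hsdot Y Y = hsdot sig sig - r.
Proof. by rewrite /Y hsdot_shift Re_tr_sig sqr_r_dim; ring. Qed.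

Lemma sum_dev b : \sum_n dev b n = 0.
Proof.
case: P_MUM => [_ [_ P_sum] _ _ _].
rewrite /dev big_split /= -Re_sum -mxtrace_sum -mulmx_suml P_sum mul1mx Re_tr_sig.
by rewrite sumr_const card_ord -mulr_natr /r mulNr mulVf ?dim_neq0 // subrr.
Qed.

Let Qs := \sum_b \sum_n dev b n ^+ 2.
Let Z := \sum_b \sum_n (dev b n)%:C *: X b n.

Lemma hsdot_ZY : hsdot Z Y = Qs.
Proof.
rewrite /Z hsdot_suml; apply: eq_bigr => b _; rewrite hsdot_suml; apply: eq_bigr => n _.
by rewrite hsdotZl hsdot_XY expr2.
Qed.

Lemma hsdot_XZ b n : hsdot (X b n) Z = del * dev b n.
Proof.
rewrite /Z hsdot_sumr (bigD1 b) //= [X in _ + X]big1 => [|b' b'_neq]; last first.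
  rewrite hsdot_sumr big1 // => n' _.
  by rewrite hsdotZr hsdot_XX eq_sym (negPf b'_neq) mulr0.
rewrite addr0 hsdot_sumr.
transitivity (\sum_n' (gam * dev b n' + (n == n')%:R * (del * dev b n'))).
  by apply: eq_bigr => n' _; rewrite hsdotZr hsdot_XX eqxx; ring.
rewrite big_split /= -mulr_sumr sum_dev mulr0 add0r (bigD1 n) //= eqxx mul1r.
by rewrite big1 ?addr0 // => n' n'_neq; rewrite eq_sym (negPf n'_neq) mul0r.
Qed.

Lemma hsdot_ZZ : hsdot Z Z = del * Qs.
Proof.
rewrite {1}/Z hsdot_suml /Qs mulr_sumr; apply: eq_bigr => b _.
by rewrite hsdot_suml mulr_sumr; apply: eq_bigr => n _; rewrite hsdotZl hsdot_XZ; ring.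
Qed.

(* Cauchy-Schwarz for <Z, Y> with the weight del^-1:
   2 Qs <= del^-1 |Z|^2 + del |Y|^2 = Qs + del (tr sig^2 - 1/d). *)
Lemma sum_dev2_le : Qs <= kappa - r.
Proof.
have [[kappa_gt _] _ _ _ _] := P_MUM.
have d_gt1 : (1 : R) < d%:R by rewrite ltr1n is_MUM_dim_gt1.
have delE : del = (kappa * d%:R - 1) / (d%:R - 1).
  by rewrite /del /gam /r; field; rewrite dim_neq0 dim_sub1_neq0.
have kappa_d : 1 < kappa * d%:R.
  by move: kappa_gt; rewrite -(ltr_pM2r (lt_trans ltr01 d_gt1)) mulVf ?dim_neq0.
have del_gt0 : 0 < del by rewrite delE divr_gt0 // subr_gt0.
have delV_gt0 : 0 < del^-1 by rewrite invr_gt0.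
have := hsdot_AMGM Z Y delV_gt0.
rewrite hsdot_ZY hsdot_ZZ hsdot_YY invrK mulrA mulVf ?gt_eqF // mul1r.
have : del * (hsdot sig sig - r) <= del * (1 - r).
  by rewrite ler_pM2l // lerD2r state_hsdot_le1.
have -> : del * (1 - r) = kappa - r.
  by rewrite delE /r; field; rewrite dim_neq0 dim_sub1_neq0.
lra.
Qed.

Lemma probs_norm_le : hsdot (probs P sig) (probs P sig) <= 1 + kappa.
Proof.
have P_psd : forall b n, psd (P b n) by case: P_MUM => [_ []].
have probs_sq b n :
    re (probs P sig (mxtens_index (b, n)) 0) ^+ 2
    = dev b n ^+ 2 + (2 * r * dev b n + r ^+ 2).
  by rewrite probs_index /dev; ring.
have probs_im b n : im (probs P sig (mxtens_index (b, n)) 0) = 0.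
  exact/Im_conj_id/probs_real/sig_state.1.
have -> : hsdot (probs P sig) (probs P sig) = Qs + \sum_b \sum_n (2 * r * dev b n + r ^+ 2).
  rewrite hsdotE big_mxtens /Qs -big_split; apply: eq_bigr => b _.
  rewrite -big_split; apply: eq_bigr => n _.
  by rewrite big_ord1 -!expr2 probs_sq probs_im expr0n addr0.
have -> : \sum_b \sum_n (2 * r * dev b n + r ^+ 2) = d.+1%:R * r.
  transitivity (\sum_(b < d.+1) r); last by rewrite sumr_const card_ord mulr_natl.
  apply: eq_bigr => b _.
  rewrite big_split /= -mulr_sumr sum_dev mulr0 add0r.
  by rewrite sumr_const card_ord -mulr_natr sqr_r_dim.
have : (d%:R : R) * r = 1 by rewrite /r mulfV ?dim_neq0.
have := sum_dev2_le; rewrite -addn1 natrD mulrDl mul1r; lra.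
Qed.

End MUMProbabilities.

Lemma ptraceB_separable dA dB k (p : 'I_k -> R) (s : 'I_k -> 'M[C]_dA)
    (t : 'I_k -> 'M[C]_dB) :
  (forall i, \tr (t i) = 1) ->
  ptraceB (\sum_i (p i)%:C *: (s i *t t i)) = \sum_i (p i)%:C *: s i.
Proof.
move=> tr_t; apply/matrixP => a a'; rewrite /ptraceB !mxE summxE.
under eq_bigr do rewrite summxE.
rewrite exchange_big /=; apply: eq_bigr => i _.
transitivity (\sum_(j < dB) (p i)%:C * (s i a a' * t i j j)).
  by apply: eq_bigr => j _; rewrite mxE tensmxE.
by rewrite -!mulr_sumr -/(mxtrace (t i)) tr_t mulr1 mxE.
Qed.

Lemma ptraceA_separable dA dB k (p : 'I_k -> R) (s : 'I_k -> 'M[C]_dA)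
    (t : 'I_k -> 'M[C]_dB) :
  (forall i, \tr (s i) = 1) ->
  ptraceA (\sum_i (p i)%:C *: (s i *t t i)) = \sum_i (p i)%:C *: t i.
Proof.
move=> tr_s; apply/matrixP => a a'; rewrite /ptraceA !mxE summxE.
under eq_bigr do rewrite summxE.
rewrite exchange_big /=; apply: eq_bigr => i _.
transitivity (\sum_(j < dA) (p i)%:C * (t i a a' * s i j j)).
  by apply: eq_bigr => j _; rewrite mxE tensmxE [s i j j * _]mulrC.
by rewrite -!mulr_sumr -/(mxtrace (s i)) tr_s mulr1 mxE.
Qed.

Lemma mul_col_adjE m n (x : 'cV[C]_m) (y : 'cV[C]_n) a b :
  (x *m adj y) a b = x a 0 * Num.conj (y b 0).
Proof. by rewrite !mxE big_ord1 adjE. Qed.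

Definition col_const l (c : R) m (x : 'cV[C]_m) : 'cV[C]_(l + m) :=
  col_mx (const_mx c%:C) x.

Lemma hsdot_col_const l c m (x : 'cV[C]_m) :
  hsdot (col_const l c x) (col_const l c x) = l%:R * c ^+ 2 + hsdot x x.
Proof.
rewrite hsdot_col hsdotE; congr (_ + _).
under eq_bigr do rewrite big_ord1 !mxE /= mulr0 addr0.
by rewrite sumr_const card_ord mulr_natl expr2.
Qed.

Lemma Mmat_separable dA dB (P : 'I_dA.+1 -> 'I_dA -> 'M[C]_dA)
    (Q : 'I_dB.+1 -> 'I_dB -> 'M[C]_dB) (mu nu : R) l k (p : 'I_k -> R)
    (s : 'I_k -> 'M[C]_dA) (t : 'I_k -> 'M[C]_dB) :
  (forall b n, psd (Q b n)) -> \sum_i p i = 1 ->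
  (forall i, is_state (s i) /\ is_state (t i)) ->
  Mmat P Q mu nu l (\sum_i (p i)%:C *: (s i *t t i))
  = \sum_i (p i)%:C *: (col_const l mu (probs P (s i))
                        *m adj (col_const l nu (probs Q (t i)))).
Proof.
move=> Q_psd p_sum1 st_state.
have tr_s i : \tr (s i) = 1 by case: (st_state i) => [[_ ->] _].
have tr_t i : \tr (t i) = 1 by case: (st_state i) => [_ [_ ->]].
have eta_real i j : Num.conj (probs Q (t i) j 0) = probs Q (t i) j 0.
  exact/probs_real/(st_state i).2.1.
under [RHS]eq_bigr do rewrite adj_col mul_col_row scale_block_mx.
rewrite summx_block /Mmat; congr block_mx; apply/matrixP => a b; rewrite ?summxE.
- rewrite mxE; under eq_bigr do rewrite mxE mul_col_adjE !mxE conjE conjc_real.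
  by rewrite -mulr_suml -rmorph_sum p_sum1 mul1r rmorphM.
- rewrite !mxE ptraceA_separable // mulmx_sumr mxtrace_sum mulr_sumr.
  apply: eq_bigr => i _.
  by rewrite mxE mul_col_adjE eta_real -scalemxAr mxtraceZ !mxE; ring.
- rewrite !mxE ptraceB_separable // mulmx_sumr mxtrace_sum mulr_sumr.
  apply: eq_bigr => i _.
  by rewrite mxE mul_col_adjE -scalemxAr mxtraceZ !mxE conjE conjc_real; ring.
- rewrite /Jmat mxE mulmx_sumr mxtrace_sum; apply: eq_bigr => i _.
  rewrite -scalemxAr mxtraceZ tensmx_mul mxtrace_tens [RHS]mxE mul_col_adjE eta_real.
  by rewrite !mxE.
Qed.

End MUMCriterion.

Theorem corollary2 (R : realType) (dA dB : nat) (kA kB : R)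
  (P : 'I_dA.+1 -> 'I_dA -> 'M[R[i]]_dA) (Q : 'I_dB.+1 -> 'I_dB -> 'M[R[i]]_dB)
  (mu nu : R) (l : nat) (rho : 'M[R[i]]_(dA * dB)) :
  is_MUM kA P -> is_MUM kB Q -> (0 < l)%N ->
  is_state rho -> separable rho ->
  forall S : 'M[R[i]]_(l + dB.+1 * dB),
    psd_sqrt_of S (adj (Mmat P Q mu nu l rho) *m Mmat P Q mu nu l rho) ->
    \tr S <= (Num.sqrt ((l%:R * mu ^+ 2 + 1 + kA) * (l%:R * nu ^+ 2 + 1 + kB)))%:C.
Proof.
move=> P_MUM Q_MUM _ _ [k [p [s [t [p_ge0 p_sum1 st_state ->]]]]] S [S_psd S_sqrt].
have Q_psd : forall b n, psd (Q b n) by case: Q_MUM => [_ []].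
have lc2_ge0 (c : R) : 0 <= l%:R * c ^+ 2 by rewrite mulr_ge0 ?sqr_ge0.
have kA_gt0 := is_MUM_kappa_gt0 P_MUM; have kB_gt0 := is_MUM_kappa_gt0 Q_MUM.
have lmu_ge0 := lc2_ge0 mu; have lnu_ge0 := lc2_ge0 nu.
apply: (tr_psd_sqrt_le_sqrt S_psd S_sqrt p_ge0 p_sum1
          (Mmat_separable P mu nu l Q_psd p_sum1 st_state)); try lra.
- move=> i; rewrite hsdot_col_const -addrA lerD2l.
  exact: probs_norm_le P_MUM (st_state i).1.
- move=> i; rewrite hsdot_col_const -addrA lerD2l.
  exact: probs_norm_le Q_MUM (st_state i).2.
Qed.
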